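(* Let $f:\mathbb{R}^d\to\mathbb{R}$ satisfy: $f$ is continuously differentiable on the level set $L(\mathbf{x}_1)=\{\mathbf{z}: f(\mathbf{z})\le f(\mathbf{x}_1)\}$, bounded below on it, and $\nabla f$ is $L$-Lipschitz on it. Run the Linear UCB Method (described in the context) with regularizer $\lambda>0$ and memory parameter $M\ge 0$. Then for each $k=1,2,\dots,K$ and every $\mathbf{s}\in\mathbb{R}^d$ with $\|\mathbf{s}\|=1$, $$\big|\mathbf{s}^\top(\nabla f(\mathbf{x}_k)-\mathbf{g}_k)\big|\le\sqrt{\frac{d(M+1)}{\lambda}}\sum_{i=\ell(k)}^{k-1}\|\nabla f(\mathbf{x}_i)-\nabla f(\mathbf{x}_{i+1})\|+\sqrt{\lambda}\,\|\nabla f(\mathbf{x}_k)\|\,\|\mathbf{s}\|_{\mathbf{C}_k^{-1}},$$ where $\ell(k):=\max\{1,k-M-1\}$ and the summation is interpreted as $0$ when $k=1$.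
   Context: For a positive definite matrix $\mathbf{A}$, $\|\mathbf{x}\|_{\mathbf{A}}:=(\mathbf{x}^\top\mathbf{A}\mathbf{x})^{1/2}$. Linear UCB Method: inputs are an initial point $\mathbf{x}_1$, horizon $K$, regularizer $\lambda>0$, stepsizes $\alpha_k>0$, and an integer memory parameter $M\ge0$. Initialize $\mathbf{C}_1=\lambda\mathbf{I}_d$, $\mathbf{b}_1=\mathbf{0}$, $\mathbf{g}_1=\mathbf{0}$. For $k=1,\dots,K$: choose some $U_k\ge\|\nabla f(\mathbf{x}_k)\|$; let $\mathbf{s}_k$ be a maximizer of $\mathbf{g}_k^\top\mathbf{s}+\sqrt{\lambda}U_k\|\mathbf{s}\|_{\mathbf{C}_k^{-1}}$ over $\{\mathbf{s}:\|\mathbf{s}\|=1\}$; set $r_k=\langle\nabla f(\mathbf{x}_k),\mathbf{s}_k\rangle$; set $\mathbf{C}_{k+1}=\lambda\mathbf{I}_d+\sum_{j=\max\{1,k-M\}}^{k}\mathbf{s}_j\mathbf{s}_j^\top$, $\mathbf{b}_{k+1}=\sum_{j=\max\{1,k-M\}}^{k}r_j\mathbf{s}_j$, $\mathbf{g}_{k+1}=\mathbf{C}_{k+1}^{-1}\mathbf{b}_{k+1}$; and set $\mathbf{x}_{k+1}=\mathbf{x}_k-\alpha_kr_k\mathbf{s}_k$. *)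

From HB Require Import structures.
From mathcomp Require Import all_boot all_order all_algebra.
From mathcomp Require Import all_classical all_reals all_analysis.
Set Implicit Arguments. Unset Strict Implicit. Unset Printing Implicit Defensive.
Import Order.TTheory GRing.Theory Num.Theory.
Import numFieldNormedType.Exports.
Local Open Scope ring_scope.

Section UCB.
Variables (R : realType) (d : nat).

Definition enorm (v : 'cV[R]_d) : R := Num.sqrt (\sum_(i < d) v i 0 ^+ 2).

Definition anorm (A : 'M[R]_d) (v : 'cV[R]_d) : R :=
  Num.sqrt ((v^T *m A *m v) 0 0).

Definition inner (u v : 'cV[R]_d) : R := (u^T *m v) 0 0.

Definition grad (f : 'cV[R]_d -> R) (x : 'cV[R]_d) : 'cV[R]_d :=
  \col_(i < d) ('D_(delta_mx i 0 : 'cV[R]_d) f x).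

Definition levelset (f : 'cV[R]_d -> R) (x1 : 'cV[R]_d) : set 'cV[R]_d :=
  [set z | f z <= f x1].

(* For k = 1 the sums are empty: C_1 = lam I, b_1 = 0, g_1 = 0. *)
Definition ucbC (lam : R) (M : nat) (s : nat -> 'cV[R]_d) (k : nat) : 'M[R]_d :=
  lam%:M + \sum_(maxn 1 (k.-1 - M) <= j < k) (s j *m (s j)^T).

Definition ucbr (f : 'cV[R]_d -> R) (x s : nat -> 'cV[R]_d) (j : nat) : R :=
  inner (grad f (x j)) (s j).

Definition ucbb (f : 'cV[R]_d -> R) (M : nat) (x s : nat -> 'cV[R]_d) (k : nat)
  : 'cV[R]_d :=
  \sum_(maxn 1 (k.-1 - M) <= j < k) (ucbr f x s j *: s j).

Definition ucbg (f : 'cV[R]_d -> R) (lam : R) (M : nat) (x s : nat -> 'cV[R]_d)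
  (k : nat) : 'cV[R]_d :=
  invmx (ucbC lam M s k) *m ucbb f M x s k.

Definition ucb_run (f : 'cV[R]_d -> R) (K : nat) (lam : R) (alpha : nat -> R)
  (M : nat) (U : nat -> R) (x s : nat -> 'cV[R]_d) : Prop :=
  forall k, (1 <= k <= K)%N ->
    [/\ 0 < alpha k,
        enorm (grad f (x k)) <= U k,
        enorm (s k) = 1,
        (forall t : 'cV[R]_d, enorm t = 1 ->
           inner (ucbg f lam M x s k) t + Num.sqrt lam * U k * anorm (invmx (ucbC lam M s k)) t
           <= inner (ucbg f lam M x s k) (s k)
              + Num.sqrt lam * U k * anorm (invmx (ucbC lam M s k)) (s k))
      & x k.+1 = x k - (alpha k * ucbr f x s k) *: s k].

End UCB.

From HB Require Import structures.
From mathcomp Require Import all_boot all_order all_algebra.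
From mathcomp Require Import all_classical all_reals all_analysis.
From mathcomp Require Import ring zify.
Import Order.TTheory GRing.Theory Num.Theory.
Import numFieldNormedType.Exports.
Local Open Scope ring_scope.
Local Open Scope classical_set_scope.
Set Implicit Arguments. Unset Strict Implicit.

(* The estimate g_k is the ridge-regression solution C^-1 b over the window of
   past directions s_j with responses r_j = <grad f(x_j), s_j>.  With u = C^-1 t,
     <t, grad f(x_k) - g_k> = lam <u, grad f(x_k)> + sum_j <s_j, grad f(x_k) - grad f(x_j)> <u, s_j>
   and t^T C^-1 t = <u, t> = lam |u|^2 + sum_j <u, s_j>^2, which is at most 1/lam for a
   unit t.  Cauchy-Schwarz bounds the first term by sqrt lam |grad f(x_k)| ||t||_(C^-1);
   each <s_j, grad f(x_k) - grad f(x_j)> is bounded by the telescoping sum of gradient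
   increments over the window, and Cauchy-Schwarz over the at most M+1 <= d(M+1) window
   indices gives sum_j |<u, s_j>| <= sqrt((M+1)/lam). *)

Section CauchySchwarz.
Variable R : realFieldType.

Lemma quadratic_ge0_sqr_le (A B P : R) :
  0 <= B -> (forall c, 0 <= A - c *+ 2 * P + c ^+ 2 * B) -> P ^+ 2 <= A * B.
Proof.
move=> B_ge0 quad_ge0.
have [B_gt0 | B_le0] := ltP 0 B.
  have := quad_ge0 (P / B).
  have -> : A - (P / B) *+ 2 * P + (P / B) ^+ 2 * B = (A * B - P ^+ 2) / B.
    by field; rewrite gt_eqF.
  by rewrite pmulr_lge0 ?invr_gt0 // subr_ge0.
have B0 : B = 0 by apply/eqP; rewrite eq_le B_le0 B_ge0.
rewrite {}B0 in quad_ge0 *.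
have [-> | P_neq0] := eqVneq P 0; first by rewrite expr0n mulr0.
(* a line with nonzero slope takes negative values *)
have := quad_ge0 ((A + 1) / (P *+ 2)).
have -> : A - (A + 1) / (P *+ 2) *+ 2 * P + ((A + 1) / (P *+ 2)) ^+ 2 * 0 = -1.
  by rewrite mulr0 addr0; field; rewrite P_neq0.
by rewrite oppr_ge0 ler10.
Qed.

Lemma sumr_CauchySchwarz I (r : seq I) (P : pred I) (a b : I -> R) :
  (\sum_(i <- r | P i) a i * b i) ^+ 2 <=
  (\sum_(i <- r | P i) a i ^+ 2) * (\sum_(i <- r | P i) b i ^+ 2).
Proof.
apply: quadratic_ge0_sqr_le => [|c]; first by apply: sumr_ge0 => i _; rewrite sqr_ge0.
have <- : \sum_(i <- r | P i) (a i - c * b i) ^+ 2 =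
  \sum_(i <- r | P i) a i ^+ 2 - c *+ 2 * (\sum_(i <- r | P i) a i * b i)
  + c ^+ 2 * (\sum_(i <- r | P i) b i ^+ 2).
  by rewrite !mulr_sumr -sumrB -big_split /=; apply: eq_bigr => i _; ring.
by apply: sumr_ge0 => i _; rewrite sqr_ge0.
Qed.

Lemma sqr_sumr_norm_le I (r : seq I) (w : I -> R) :
  (\sum_(i <- r) `|w i|) ^+ 2 <= (size r)%:R * \sum_(i <- r) w i ^+ 2.
Proof.
have sum_norm : \sum_(i <- r) 1 * `|w i| = \sum_(i <- r) `|w i|.
  by apply: eq_bigr => i _; rewrite mul1r.
have sum_one : \sum_(i <- r) (1 : R) ^+ 2 = (size r)%:R.
  by under eq_bigr do rewrite expr1n; rewrite -sum1_size natr_sum.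
have sum_sqr : \sum_(i <- r) `|w i| ^+ 2 = \sum_(i <- r) w i ^+ 2.
  by apply: eq_bigr => i _; rewrite real_normK ?num_real.
rewrite -sum_norm -sum_one -sum_sqr.
exact: sumr_CauchySchwarz r predT (fun=> 1) (fun i => `|w i|).
Qed.

End CauchySchwarz.

Section Euclidean.
Variables (R : realType) (d : nat).
Implicit Types (u v w : 'cV[R]_d).

Lemma innerE u v : inner u v = \sum_(i < d) u i 0 * v i 0.
Proof. by rewrite /inner mxE; apply: eq_bigr => i _; rewrite mxE. Qed.

Lemma innerC u v : inner u v = inner v u.
Proof. by rewrite !innerE; apply: eq_bigr => i _; rewrite mulrC. Qed.

Lemma innerBr u v w : inner u (v - w) = inner u v - inner u w.
Proof. by rewrite /inner mulmxBr !mxE. Qed.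

Lemma innerZr u a v : inner u (a *: v) = a * inner u v.
Proof. by rewrite /inner -scalemxAr mxE. Qed.

Lemma inner_sumr u I (r : seq I) (F : I -> 'cV[R]_d) :
  inner u (\sum_(i <- r) F i) = \sum_(i <- r) inner u (F i).
Proof. by rewrite /inner mulmx_sumr summxE. Qed.

Lemma inner_mulmxr (A : 'M[R]_d) u v : inner u (A *m v) = inner (A^T *m u) v.
Proof. by rewrite /inner trmx_mul trmxK mulmxA. Qed.

Lemma inner_self_ge0 v : 0 <= inner v v.
Proof. by rewrite innerE; apply: sumr_ge0 => i _; rewrite -expr2 sqr_ge0. Qed.

Lemma inner_self_eq0 v : (inner v v == 0) = (v == 0).
Proof.
apply/eqP/eqP => [|->]; last by rewrite /inner mulmx0 mxE.
rewrite innerE => /psumr_eq0P sq_eq0; apply/matrixP => i j; rewrite ord1 mxE.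
by apply/eqP; rewrite -sqrf_eq0 expr2 sq_eq0 // => k _; rewrite -expr2 sqr_ge0.
Qed.

Lemma enormE v : enorm v = Num.sqrt (inner v v).
Proof. by rewrite /enorm innerE; under eq_bigr do rewrite expr2. Qed.

Lemma enorm_ge0 v : 0 <= enorm v.
Proof. exact: sqrtr_ge0. Qed.

Lemma enormN v : enorm (- v) = enorm v.
Proof. by rewrite /enorm; under eq_bigr do rewrite mxE sqrrN. Qed.

Lemma enorm_neq0_dim_gt0 v : enorm v != 0 -> (0 < d)%N.
Proof.
by case: d v => // v; rewrite /enorm big_ord0 sqrtr0 eqxx.
Qed.

Lemma inner_CauchySchwarz u v : `|inner u v| <= enorm u * enorm v.
Proof.
rewrite !enormE -sqrtrM ?inner_self_ge0 // -sqrtr_sqr.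
rewrite ler_sqrt ?mulr_ge0 ?inner_self_ge0 // !innerE.
have := sumr_CauchySchwarz (index_enum 'I_d) predT (fun i => u i 0) (fun i => v i 0).
by under [in X in _ <= X -> _]eq_bigr do rewrite expr2.
Qed.

Lemma inner_telescope_le (G : nat -> 'cV[R]_d) v (lo j k : nat) :
  enorm v = 1 -> (lo <= j <= k)%N ->
  `|inner v (G k - G j)| <= \sum_(lo <= i < k) enorm (G i - G i.+1).
Proof.
move=> v1 /andP[lo_j j_k].
rewrite -(telescope_sumr _ j_k) inner_sumr (big_cat_nat lo_j j_k) /=.
apply: le_trans (ler_norm_sum _ _ _) _.
rewrite -[X in X <= _]add0r; apply: lerD.
  by apply: sumr_ge0 => i _; apply: enorm_ge0.
apply: ler_sum => i _; apply: le_trans (inner_CauchySchwarz _ _) _.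
by rewrite v1 mul1r -opprB enormN.
Qed.

End Euclidean.

Section RidgeRegression.
Variables (R : realType) (d : nat) (lam : R) (r : seq nat) (s : nat -> 'cV[R]_d).
Hypothesis lam_gt0 : 0 < lam.

Definition gram : 'M[R]_d := lam%:M + \sum_(j <- r) s j *m (s j)^T.

Lemma gram_mulmx (v : 'cV[R]_d) : gram *m v = lam *: v + \sum_(j <- r) inner (s j) v *: s j.
Proof.
rewrite mulmxDl mul_scalar_mx mulmx_suml; congr (_ + _).
by apply: eq_bigr => j _; rewrite -mulmxA [_ *m v]mx11_scalar mul_mx_scalar.
Qed.

Lemma inner_gram (u v : 'cV[R]_d) :
  inner u (gram *m v) = lam * inner u v + \sum_(j <- r) inner (s j) v * inner u (s j).
Proof.
rewrite gram_mulmx /inner mulmxDr mulmx_sumr -scalemxAr !mxE summxE; congr (_ + _).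
by apply: eq_bigr => j _; rewrite -scalemxAr mxE.
Qed.

Lemma trmx_gram : gram^T = gram.
Proof.
rewrite /gram linearD /= tr_scalar_mx linear_sum /=.
by congr (_ + _); apply: eq_bigr => j _; rewrite trmx_mul trmxK.
Qed.

Lemma inner_gram_self_ge (u : 'cV[R]_d) : lam * inner u u <= inner u (gram *m u).
Proof.
rewrite inner_gram lerDl; apply: sumr_ge0 => j _.
by rewrite innerC -expr2 sqr_ge0.
Qed.

Lemma gram_unitmx : gram \in unitmx.
Proof.
rewrite unitmxE unitfE; apply/det0P => -[v v_neq0 v_ker].
have gram_v : gram *m v^T = 0 by rewrite -trmx_gram -trmx_mul v_ker trmx0.
have : inner v^T v^T <= 0.
  rewrite -(pmulr_rle0 _ lam_gt0); apply: le_trans (inner_gram_self_ge v^T) _.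
  by rewrite gram_v /inner mulmx0 mxE.
rewrite le_eqVlt ltNge inner_self_ge0 orbF inner_self_eq0 => /eqP/(congr1 trmx).
by rewrite trmxK trmx0 => v0; rewrite v0 eqxx in v_neq0.
Qed.

Lemma gram_invmxK (v : 'cV[R]_d) : gram *m (invmx gram *m v) = v.
Proof. by rewrite mulmxA mulmxV ?gram_unitmx // mul1mx. Qed.

Variable t : 'cV[R]_d.
Let u := invmx gram *m t.

Lemma ridge_residualE (G : 'cV[R]_d) (y : nat -> R) :
  inner t (G - invmx gram *m \sum_(j <- r) y j *: s j)
  = lam * inner u G + \sum_(j <- r) (inner (s j) G - y j) * inner u (s j).
Proof.
have u_sym a : inner t (invmx gram *m a) = inner u a.
  by rewrite inner_mulmxr trmx_inv trmx_gram.
rewrite innerBr u_sym inner_sumr -{1}(gram_invmxK t) -/u.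
rewrite -[in inner (gram *m u)]trmx_gram -inner_mulmxr inner_gram -addrA -sumrB.
by congr (_ + _); apply: eq_bigr => j _; rewrite innerZr mulrBl.
Qed.

Lemma inner_invgramE : inner u t = lam * inner u u + \sum_(j <- r) inner u (s j) ^+ 2.
Proof.
rewrite -{1}(gram_invmxK t) -/u inner_gram; congr (_ + _).
by apply: eq_bigr => j _; rewrite innerC expr2.
Qed.

Lemma inner_invgram_ge_reg : lam * inner u u <= inner u t.
Proof. by rewrite inner_invgramE lerDl; apply: sumr_ge0 => j _; rewrite sqr_ge0. Qed.

Lemma inner_invgram_ge0 : 0 <= inner u t.
Proof.
by apply: le_trans inner_invgram_ge_reg; rewrite mulr_ge0 ?inner_self_ge0 ?(ltW lam_gt0).
Qed.

Lemma inner_invgram_ge_fit : \sum_(j <- r) inner u (s j) ^+ 2 <= inner u t.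
Proof. by rewrite inner_invgramE lerDr mulr_ge0 ?inner_self_ge0 ?(ltW lam_gt0). Qed.

Lemma anorm_invgram : anorm (invmx gram) t = Num.sqrt (inner u t).
Proof. by rewrite /anorm -mulmxA innerC. Qed.

Lemma inner_invgram_le : enorm t = 1 -> inner u t <= lam^-1.
Proof.
move=> t1; have lam_le := inner_invgram_ge_reg.
set Q := inner u t in lam_le *.
have Q_ge0 : 0 <= Q := inner_invgram_ge0.
have Q_sqr_le : Q ^+ 2 <= inner u u.
  rewrite -(sqr_sqrtr (inner_self_ge0 u)) ler_sqr ?nnegrE ?sqrtr_ge0 //.
  by rewrite -enormE -[enorm u]mulr1 -t1; apply: le_trans (ler_norm _) (inner_CauchySchwarz _ _).
(* [lam Q^2 <= lam |u|^2 <= Q] *)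
have lamQ_Q : Q * (lam * Q) <= Q * 1.
  by rewrite mulr1 mulrCA -expr2; apply: le_trans lam_le; rewrite ler_pM2l.
rewrite -(ler_pM2l lam_gt0) mulfV ?gt_eqF //.
have [Q0|Q_neq0] := eqVneq Q 0; first by rewrite Q0 mulr0.
have Q_gt0 : 0 < Q by rewrite lt_neqAle eq_sym Q_neq0.
by rewrite -(ler_pM2l Q_gt0).
Qed.

Lemma ridge_error_bound (G : 'cV[R]_d) (y : nat -> R) (E : R) :
  enorm t = 1 -> 0 <= E -> (forall j, j \in r -> `|inner (s j) G - y j| <= E) ->
  `|inner t (G - invmx gram *m \sum_(j <- r) y j *: s j)|
    <= Num.sqrt ((size r)%:R / lam) * E + Num.sqrt lam * enorm G * anorm (invmx gram) t.
Proof.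
move=> t1 E_ge0 err_le.
rewrite ridge_residualE anorm_invgram.
apply: le_trans (ler_normD _ _) _; rewrite addrC; apply: lerD.
  have sum_le : \sum_(j <- r) `|inner u (s j)| <= Num.sqrt ((size r)%:R / lam).
    rewrite -[X in X <= _]ger0_norm ?sumr_ge0 // -sqrtr_sqr.
    rewrite ler_sqrt ?divr_ge0 ?ler0n ?(ltW lam_gt0) //.
    apply: le_trans (sqr_sumr_norm_le _ _) _; rewrite ler_wpM2l ?ler0n //.
    exact: le_trans inner_invgram_ge_fit (inner_invgram_le t1).
  apply: le_trans (ler_norm_sum _ _ _) _.
  apply: le_trans (_ : \sum_(j <- r) E * `|inner u (s j)| <= _).
    rewrite big_seq [X in _ <= X]big_seq; apply: ler_sum => j jr.
    by rewrite normrM; apply: (ler_wpM2r (normr_ge0 _)); apply: err_le.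
  by rewrite -mulr_sumr mulrC; apply: (ler_wpM2r E_ge0).
have lam_u : lam * enorm u <= Num.sqrt lam * Num.sqrt (inner u t).
  have -> : lam * enorm u = Num.sqrt lam * Num.sqrt (lam * inner u u).
    by rewrite enormE sqrtrM ?(ltW lam_gt0) // mulrA -expr2 sqr_sqrtr ?(ltW lam_gt0).
  by rewrite ler_wpM2l ?sqrtr_ge0 // ler_sqrt ?inner_invgram_ge0 ?inner_invgram_ge_reg.
rewrite normrM (ger0_norm (ltW lam_gt0)).
apply: le_trans (ler_wpM2l (ltW lam_gt0) (inner_CauchySchwarz u G)) _.
by rewrite mulrA [leRHS]mulrAC; apply: (ler_wpM2r (enorm_ge0 G)).
Qed.

End RidgeRegression.

Theorem lemma3 (R : realType) (d : nat) (f : 'cV[R]_d -> R)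
  (Lc : R) (K : nat) (lam : R) (alpha : nat -> R) (M : nat) (U : nat -> R)
  (x s : nat -> 'cV[R]_d) :
  (* f continuously differentiable on the level set L(x_1) *)
  (forall z, levelset f (x 1%N) z -> differentiable f z) ->
  {within levelset f (x 1%N), continuous (grad f)} ->
  (* f bounded below on L(x_1) *)
  (exists m : R, forall z, levelset f (x 1%N) z -> m <= f z) ->
  (* grad f is L-Lipschitz on L(x_1) *)
  0 <= Lc ->
  (forall y z, levelset f (x 1%N) y -> levelset f (x 1%N) z ->
     enorm (grad f y - grad f z) <= Lc * enorm (y - z)) ->
  0 < lam ->
  ucb_run f K lam alpha M U x s ->
  forall k, (1 <= k <= K)%N ->
  forall t : 'cV[R]_d, enorm t = 1 ->
  `| inner t (grad f (x k) - ucbg f lam M x s k) |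
    <= Num.sqrt ((d * M.+1)%:R / lam)
         * (\sum_(maxn 1 (k - M.+1) <= i < k) enorm (grad f (x i) - grad f (x i.+1)))
       + Num.sqrt lam * enorm (grad f (x k)) * anorm (invmx (ucbC lam M s k)) t.
Proof.
move=> _ _ _ _ _ lam_gt0 run k /andP[_ k_le_K] t t1.
have d_gt0 : (0 < d)%N by apply: (@enorm_neq0_dim_gt0 _ _ t); rewrite t1 oner_neq0.
have -> : maxn 1 (k - M.+1) = maxn 1 (k.-1 - M) by congr maxn; lia.
set lo := maxn 1 (k.-1 - M).
set S := \sum_(lo <= i < k) _.
have S_ge0 : 0 <= S by apply: sumr_ge0 => i _; apply: enorm_ge0.
have err_le j : j \in index_iota lo k ->
    `|inner (s j) (grad f (x k)) - ucbr f x s j| <= S.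
  rewrite mem_index_iota => /andP[lo_j j_k].
  have sj1 : enorm (s j) = 1 by case: (run j) => //; rewrite /lo in lo_j; lia.
  rewrite /ucbr (innerC (grad f (x j))) -innerBr.
  by apply: (inner_telescope_le (fun i => grad f (x i))) => //; rewrite lo_j (ltnW j_k).
apply: le_trans (ridge_error_bound lam_gt0 t1 S_ge0 err_le) _.
have window_le : (k - lo <= d * M.+1)%N.
  by apply: leq_trans (leq_pmull _ d_gt0); rewrite /lo; lia.
rewrite size_iota; apply: lerD => //; apply: ler_wpM2r => //.
by rewrite ler_sqrt ?ler_pM2r ?invr_gt0 ?ler_nat ?divr_ge0 ?ler0n ?(ltW lam_gt0).
Qed.
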